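(* For $\lambda\in\mathbb C$ let $T_\lambda=\begin{bmatrix}0&1&0\\0&0&0\\0&0&\lambda\end{bmatrix}\in M_3(\mathbb C)$. Then $C^*_e(\mathcal S_{T_\lambda})\cong M_2(\mathbb C)$ if $|\lambda|\le 1/2$, and $C^*_e(\mathcal S_{T_\lambda})\cong M_2(\mathbb C)\oplus\mathbb C$ if $|\lambda|>1/2$.
   Context: $\mathcal S_T=\mathrm{span}\{1,T,T^*\}$. For an operator system $\mathcal S\subseteq B(H)$, a boundary representation is an irreducible unital $*$-representation $\rho$ of $C^*(\mathcal S)$ such that $\rho$ is the only unital completely positive extension of $\rho|_{\mathcal S}$ to $C^*(\mathcal S)$; the Šilov ideal $\mathfrak S_{\mathcal S}$ is the intersection of the kernels of all boundary representations, and the C$^*$-envelope is $C^*_e(\mathcal S)=C^*(\mathcal S)/\mathfrak S_{\mathcal S}$ (equivalently, the C$^*$-algebra $C^*_e(\mathcal S)$ with a unital complete isometry $\iota:\mathcal S\to C^*_e(\mathcal S)$ generating it, such that for every unital complete isometry $\phi$ of $\mathcal S$ into a C$^*$-algebra there is a $*$-epimorphism $\pi:C^*(\phi(\mathcal S))\to C^*_e(\mathcal S)$ with $\pi\circ\phi=\iota$; unique up to $*$-isomorphism). *)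

From HB Require Import structures.
From mathcomp Require Import all_boot all_order all_algebra.
Set Implicit Arguments. Unset Strict Implicit. Unset Printing Implicit Defensive.
Import Order.TTheory GRing.Theory Num.Theory.
Local Open Scope ring_scope.

Definition adj {C : numClosedFieldType} {m n : nat} (A : 'M[C]_(m, n)) : 'M[C]_(n, m) :=
  (map_mx (@Num.conj C) A)^T.

Definition opsys {C : numClosedFieldType} {m : nat} (T : 'M[C]_m) (a : 'M[C]_m) : Prop :=
  exists c0 c1 c2 : C, a = c0 *: 1%:M + c1 *: T + c2 *: adj T.

(* C^*(S): the unital *-subalgebra of M_m generated by S (in finite dimension
   it is automatically norm closed). *)
Inductive cstar_gen {C : numClosedFieldType} {m : nat} (S : 'M[C]_m -> Prop) : 'M[C]_m -> Prop :=
| cg_S a : S a -> cstar_gen S a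
| cg_1 : cstar_gen S 1%:M
| cg_add a b : cstar_gen S a -> cstar_gen S b -> cstar_gen S (a + b)
| cg_scale (c : C) a : cstar_gen S a -> cstar_gen S (c *: a)
| cg_mul a b : cstar_gen S a -> cstar_gen S b -> cstar_gen S (a *m b)
| cg_adj a : cstar_gen S a -> cstar_gen S (adj a).

Definition blockpos {C : numClosedFieldType} {n m : nat} (A : 'I_n -> 'I_n -> 'M[C]_m) : Prop :=
  forall x : 'I_n -> 'cV[C]_m,
    0 <= \sum_(i < n) \sum_(j < n) (adj (x i) *m A i j *m x j) 0 0.

Definition linear_on {C : numClosedFieldType} {m k : nat}
  (D : 'M[C]_m -> Prop) (f : 'M[C]_m -> 'M[C]_k) : Prop :=
  (forall a b, D a -> D b -> f (a + b) = f a + f b) /\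
  (forall (c : C) a, D a -> f (c *: a) = c *: f a).

Definition is_starhom {C : numClosedFieldType} {m k : nat}
  (D : 'M[C]_m -> Prop) (f : 'M[C]_m -> 'M[C]_k) : Prop :=
  [/\ f 1%:M = 1%:M, linear_on D f,
      forall a b, D a -> D b -> f (a *m b) = f a *m f b &
      forall a, D a -> f (adj a) = adj (f a)].

(* Subspaces are row spaces of V; the column vector x^T lies in the
   subspace iff x does, and rho(a) x^T = (x *m rho(a)^T)^T. *)
Definition irreducible_rep {C : numClosedFieldType} {m k : nat}
  (D : 'M[C]_m -> Prop) (f : 'M[C]_m -> 'M[C]_k) : Prop :=
  (0 < k)%N /\
  forall V : 'M[C]_k,
    (forall a, D a -> (V *m (f a)^T <= V)%MS) -> (V <= (0 : 'M[C]_k))%MS \/ ((1%:M : 'M[C]_k) <= V)%MS.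

Definition is_ucp {C : numClosedFieldType} {m k : nat}
  (D : 'M[C]_m -> Prop) (f : 'M[C]_m -> 'M[C]_k) : Prop :=
  [/\ f 1%:M = 1%:M, linear_on D f &
      forall (n : nat) (A : 'I_n -> 'I_n -> 'M[C]_m),
        (forall i j, D (A i j)) -> blockpos A -> blockpos (fun i j => f (A i j))].

Definition boundary_rep {C : numClosedFieldType} {m k : nat}
  (S : 'M[C]_m -> Prop) (rho : 'M[C]_m -> 'M[C]_k) : Prop :=
  [/\ is_starhom (cstar_gen S) rho, irreducible_rep (cstar_gen S) rho &
      forall phi : 'M[C]_m -> 'M[C]_k,
        is_ucp (cstar_gen S) phi -> (forall a, S a -> phi a = rho a) ->
        forall a, cstar_gen S a -> phi a = rho a].

Definition silov {C : numClosedFieldType} {m : nat} (S : 'M[C]_m -> Prop) (a : 'M[C]_m) : Prop :=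
  cstar_gen S a /\
  forall (k : nat) (rho : 'M[C]_m -> 'M[C]_k), boundary_rep S rho -> rho a = 0.

(* C^*_e(S) = C^*(S)/Silov ideal is *-isomorphic to M_p(C): there is a
   surjective *-homomorphism C^*(S) -> M_p whose kernel is the Silov ideal. *)
Definition env_iso_M {C : numClosedFieldType} {m : nat} (S : 'M[C]_m -> Prop) (p : nat) : Prop :=
  exists pi : 'M[C]_m -> 'M[C]_p,
    [/\ is_starhom (cstar_gen S) pi,
        forall B : 'M[C]_p, exists2 a, cstar_gen S a & pi a = B &
        forall a, cstar_gen S a -> (pi a = 0 <-> silov S a)].

(* C^*_e(S) is *-isomorphic to M_p(C) (+) M_q(C) (with C = M_1(C)). *)
Definition env_iso_MM {C : numClosedFieldType} {m : nat} (S : 'M[C]_m -> Prop) (p q : nat) : Prop :=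
  exists (pi1 : 'M[C]_m -> 'M[C]_p) (pi2 : 'M[C]_m -> 'M[C]_q),
    [/\ is_starhom (cstar_gen S) pi1, is_starhom (cstar_gen S) pi2,
        forall (B1 : 'M[C]_p) (B2 : 'M[C]_q),
          exists2 a, cstar_gen S a & pi1 a = B1 /\ pi2 a = B2 &
        forall a, cstar_gen S a -> (pi1 a = 0 /\ pi2 a = 0 <-> silov S a)].

Definition Tlam {C : numClosedFieldType} (l : C) : 'M[C]_3 :=
  \matrix_(i < 3, j < 3)
    (if ((i : nat) == 0%N) && ((j : nat) == 1%N) then 1
     else if ((i : nat) == 2%N) && ((j : nat) == 2%N) then l else 0).

From HB Require Import structures.
From mathcomp Require Import all_boot all_order all_algebra.
From mathcomp Require Import ring.
Set Implicit Arguments. Unset Strict Implicit. Unset Printing Implicit Defensive.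
Import Order.TTheory GRing.Theory Num.Theory.
Local Open Scope ring_scope.

(* C^*(S_T) is the block-diagonal algebra M_2(C) (+) C inside M_3(C): it is
   contained in that pattern ([cstar_blockdiag]) and contains its five matrix
   units (from T^2, TT^*, T^*T).  Its irreducible representations are thus
   the corner pi1 : a |-> a_{0..1,0..1} and the entry pi2 : a |-> a_22, and
   the envelope is obtained by deciding which of them are boundary
   representations:
   - pi1 always is: a UCP extension phi of pi1|S sends E_22 to a positive D
     with <Dp, p> = 0 for three unimodular phases (Choi-matrix positivity
     tested on (p, om p)), so D = 0, and then phi = pi1 on every unit;
   - for |lambda| > 1/2, pi2 is too: positivity of the Choi matrix of a UCP
     extension on (1, -2 conj lambda) gives (1 - 4|lambda|^2) phi(E_00) >= 0;
   - for |lambda| <= 1/2 every boundary representation kills E_22, since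
     lambda is in the numerical range of the 2 x 2 Jordan block, giving a
     vector state that extends pi2|S but vanishes on E_22.
   The Silov ideal is then ker pi1, resp. 0, which is the theorem. *)

Lemma matrix_unit_invariant_trivial (F : fieldType) (k : nat) (V : 'M[F]_k) :
  (forall i j : 'I_k, (V *m delta_mx i j <= V)%MS) ->
  (V <= (0 : 'M[F]_k))%MS \/ ((1%:M : 'M[F]_k) <= V)%MS.
Proof.
move=> Vinv; have [->|nzV] := eqVneq V 0; first by left; rewrite submx0.
right; have [[r c] /= Vrc] : exists rc : 'I_k * 'I_k, V rc.1 rc.2 != 0.
  apply/existsP; apply: contraR nzV => /existsPn V0.
  by apply/eqP/matrixP => r c; rewrite mxE; move: (V0 (r, c)); rewrite negbK => /eqP.
apply/row_subP => j; rewrite row1.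
have -> : 'e_j = (V r c)^-1 *: row r (V *m delta_mx c j).
  apply/matrixP => a b; rewrite !mxE (bigD1 c) //= big1 ?addr0.
    by rewrite !mxE eqxx /= ord1 eqxx /= mulrA mulVf // mul1r.
  by move=> p /negbTE pc; rewrite mxE pc mulr0.
by apply: scalemx_sub; apply: submx_trans (Vinv c j); apply: row_sub.
Qed.

Section Positivity.
Variable C : numClosedFieldType.

Lemma adjZ (m n : nat) (c : C) (M : 'M[C]_(m, n)) : adj (c *: M) = c^* *: adj M.
Proof. by apply/matrixP => i j; rewrite !mxE rmorphM. Qed.

Lemma form_delta_mx (m : nat) (u v : 'cV[C]_m) (a b : 'I_m) :
  (adj u *m delta_mx a b *m v) 0 0 = (u a 0)^* * v b 0.
Proof.
have inner j : (adj u *m delta_mx a b) 0 j = (u a 0)^* * (j == b)%:R.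
  rewrite mxE (bigD1 a) //= big1 => [|i /negbTE ia]; last by rewrite !mxE ia mulr0.
  by rewrite !mxE eqxx addr0 eq_sym.
rewrite mxE (bigD1 b) //= big1 => [|j /negbTE jb]; last by rewrite inner jb mulr0 mul0r.
by rewrite inner eqxx mulr1 addr0.
Qed.

(* For any f : 'I_n -> 'I_m the operator matrix [E_(f i, f j)]_(i,j) is
   positive: it is the Gram matrix of the vectors e_(f i). *)
Lemma blockpos_matrix_units (m n : nat) (f : 'I_n -> 'I_m) :
  blockpos (fun i j => delta_mx (f i) (f j) : 'M[C]_m).
Proof.
move=> x; under eq_bigr => i _ do under eq_bigr => j _ do rewrite form_delta_mx.
under eq_bigr => i _ do rewrite -mulr_sumr.
rewrite -mulr_suml -rmorph_sum mulrC; exact: mul_conjC_ge0.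
Qed.

Lemma ucp_matrix_units (m k n : nat) (D : 'M[C]_m -> Prop) (phi : 'M[C]_m -> 'M[C]_k)
    (f : 'I_n -> 'I_m) (x : 'I_n -> 'cV[C]_k) :
  is_ucp D phi -> (forall i j, D (delta_mx (f i) (f j))) ->
  0 <= \sum_(i < n) \sum_(j < n) (adj (x i) *m phi (delta_mx (f i) (f j)) *m x j) 0 0.
Proof. by case=> _ _ cp Df; exact: (cp n _ Df (blockpos_matrix_units f) x). Qed.

Definition vstate (m : nat) (xi : 'cV[C]_m) (a : 'M[C]_m) : C := (adj xi *m a *m xi) 0 0.

Lemma vstateD (m : nat) (xi : 'cV[C]_m) a b : vstate xi (a + b) = vstate xi a + vstate xi b.
Proof. by rewrite /vstate mulmxDr mulmxDl mxE. Qed.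

Lemma vstateZ (m : nat) (xi : 'cV[C]_m) (c : C) a : vstate xi (c *: a) = c * vstate xi a.
Proof. by rewrite /vstate -scalemxAr -scalemxAl mxE. Qed.

Lemma vector_state_cp (m k n : nat) (xi : 'cV[C]_m) (A : 'I_n -> 'I_n -> 'M[C]_m) :
  blockpos A -> blockpos (fun i j => vstate xi (A i j) *: (1%:M : 'M[C]_k)).
Proof.
move=> Apos x; rewrite /vstate.
have -> : \sum_(i < n) \sum_(j < n)
      (adj (x i) *m (((adj xi *m A i j *m xi) 0 0) *: (1%:M : 'M[C]_k)) *m x j) 0 0
  = \sum_(r < k) \sum_(i < n) \sum_(j < n)
      (adj ((x i r 0) *: xi) *m A i j *m ((x j r 0) *: xi)) 0 0.
  symmetry; rewrite exchange_big; apply: eq_bigr => i _.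
  rewrite exchange_big; apply: eq_bigr => j _; symmetry.
  rewrite scalemx1 mul_mx_scalar -scalemxAl mxE [(adj (x i) *m x j) 0 0]mxE mulr_sumr.
  apply: eq_bigr => r _; rewrite adjZ -!scalemxAl -scalemxAr !mxE; ring.
by apply: sumr_ge0 => r _; apply: Apos.
Qed.

Lemma vector_state_ucp (m k : nat) (D : 'M[C]_m -> Prop) (xi : 'cV[C]_m) :
  vstate xi 1%:M = 1 -> is_ucp D (fun a => vstate xi a *: (1%:M : 'M[C]_k)).
Proof.
move=> xi1; split=> [|| n A _ /vector_state_cp //]; first by rewrite xi1 scale1r.
by split=> [a b _ _|c a _]; rewrite ?vstateD ?scalerDl // vstateZ scalerA.
Qed.

End Positivity.
Arguments ucp_matrix_units {C m k n D phi} f x.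

Section ScalarFacts.
Variable C : numClosedFieldType.

Lemma unimodular_phase (z : C) : exists u : C, u * u^* = 1 /\ 0 <= z * u.
Proof.
have [->|z0] := eqVneq z 0; first by exists 1; rewrite conjC1 mulr1 mul0r.
have nz0 : `|z| != 0 by rewrite normr_eq0.
have zz : z * z^* = `|z| * `|z| by rewrite -normCK expr2.
have nzc : `|z|^* = `|z| by rewrite geC0_conj.
exists (z^* / `|z|); split; last by rewrite mulrA zz mulfK.
rewrite rmorphM /= conjCK rmorphV /= ?unitfE // nzc mulrACA -invfM.
by rewrite [z^* * z]mulrC zz mulfV // mulf_neq0.
Qed.

Lemma phase_system_eq0 (c s t : C) :
  c - s - t = 0 -> c + 'i * s - 'i * t = 0 -> c - 'i * s + 'i * t = 0 ->
  [/\ c = 0, s = 0 & t = 0].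
Proof.
move=> e1 e2 e3.
have c0 : c = 0.
  have : c *+ 2 = 0 by rewrite -[RHS](addr0 0) -{1}e2 -e3; ring.
  by move/eqP; rewrite mulrn_eq0 => /eqP.
move: e1 e2; rewrite c0 sub0r add0r => e1 e2.
have st : s = t.
  have : 'i * (s - t) = 0 by rewrite -e2; ring.
  by move/eqP; rewrite mulf_eq0 (negbTE (neq0Ci C)) subr_eq0 => /eqP.
move: e1; rewrite st -opprD => /eqP; rewrite oppr_eq0 -mulr2n mulrn_eq0 => /eqP t0.
by rewrite t0.
Qed.

Lemma conj_linear_ge0_eq0 (z w : C) :
  (forall b : C, 0 <= b * z + b^* * w) -> z = 0 /\ w = 0.
Proof.
move=> pos.
have ge0_le0 (x : C) : 0 <= x -> 0 <= - x -> x = 0.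
  by move=> x_ge0 Nx_ge0; apply/le_anti; rewrite x_ge0 andbT -oppr_ge0.
have sum0 : z + w = 0.
  apply: ge0_le0; first by move: (pos 1); rewrite conjC1 !mul1r.
  by move: (pos (-1)); rewrite rmorphN /= conjC1 !mulN1r opprD.
have diff0 : 'i * (z - w) = 0.
  apply: ge0_le0; first by move: (pos 'i); rewrite conjCi mulNr mulrBr.
  by move: (pos (- 'i)); rewrite rmorphN /= conjCi opprK mulNr mulrBr opprB addrC.
move/eqP: diff0; rewrite mulf_eq0 (negbTE (neq0Ci C)) subr_eq0 => /eqP zw.
have z0 : z = 0 by apply/eqP; move: sum0; rewrite -zw -mulr2n => /eqP; rewrite mulrn_eq0.
by rewrite -zw z0.
Qed.

Lemma disc_factor (z : C) :
  1 - 4%:R * (z * z^*) = (1 - `|z| *+ 2) * (1 + `|z| *+ 2).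
Proof. by rewrite -normCK -[`|z| *+ 2]mulr_natr; ring. Qed.

Lemma twice_sub_half (x : C) : 1 - x *+ 2 = 2%:R * (2^-1 - x).
Proof. by rewrite mulrBr mulfV ?pnatr_eq0 // mulr_natl. Qed.

Lemma disc_ge0 (z : C) : `|z| <= 2^-1 -> 0 <= 1 - 4%:R * (z * z^*).
Proof.
move=> zle; rewrite disc_factor mulr_ge0 //.
  by rewrite twice_sub_half mulr_ge0 ?ler0n // subr_ge0.
by rewrite addr_ge0 ?ler01 // mulrn_wge0.
Qed.

Lemma disc_lt0 (z : C) : 2^-1 < `|z| -> 1 - 4%:R * (z * z^*) < 0.
Proof.
move=> zgt; rewrite disc_factor pmulr_llt0 ?ltr_wpDr ?ltr01 ?mulrn_wge0 //.
by rewrite twice_sub_half pmulr_rlt0 ?ltr0n // subr_lt0.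
Qed.

End ScalarFacts.

Section Envelope.
Variable C : numClosedFieldType.
Variable l : C.

Local Notation T := (Tlam l).
Local Notation E := (@delta_mx C 3 3).
Local Notation S := (opsys T).
Local Notation CS := (cstar_gen S).

Definition i0 : 'I_3 := @Ordinal 3 0 isT.
Definition i1 : 'I_3 := @Ordinal 3 1 isT.
Definition i2 : 'I_3 := @Ordinal 3 2 isT.

Lemma ord3P (i : 'I_3) : [\/ i = i0, i = i1 | i = i2].
Proof.
by case: i => [[|[|[|k]]] ik] //; [constructor 1|constructor 2|constructor 3]; apply: val_inj.
Qed.

Lemma sum3 (f : 'I_3 -> C) : \sum_k f k = f i0 + f i1 + f i2.
Proof. by rewrite !big_ord_recr big_ord0 /= add0r; congr (f _ + f _ + f _); apply: val_inj. Qed.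

Ltac expand3 := apply/matrixP; do 2 (let x := fresh "x" in move=> x; case: (ord3P x) => ->);
  rewrite ?(mxE, sum3) /=.

Lemma Tlam_units : T = E i0 i1 + l *: E i2 i2.
Proof. expand3; ring. Qed.

Lemma adjT_units : adj T = E i1 i0 + l^* *: E i2 i2.
Proof. expand3; rewrite ?conjC0 ?conjC1; ring. Qed.

Lemma T_adjT : T *m adj T = E i0 i0 + (l * l^*) *: E i2 i2.
Proof. expand3; rewrite ?conjC0 ?conjC1; ring. Qed.

Lemma adjT_T : adj T *m T = E i1 i1 + (l * l^*) *: E i2 i2.
Proof. expand3; rewrite ?conjC0 ?conjC1; ring. Qed.

Lemma T_T : T *m T = (l * l) *: E i2 i2.
Proof. expand3; ring. Qed.

Lemma opsys_T : S T.
Proof. by exists 0, 1, 0; rewrite !scale0r scale1r add0r addr0. Qed.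

Lemma opsys_adjT : S (adj T).
Proof. by exists 0, 0, 1; rewrite !scale0r scale1r !add0r. Qed.

Lemma cstar_lin a b (c : C) : CS a -> CS b -> CS (a + c *: b).
Proof. by move=> Ca Cb; apply: cg_add => //; apply: cg_scale. Qed.

(* C^*(S_T) contains the five matrix units of M_2(C) (+) C: first E_22,
   from T^2 (or from 1 - TT^* - T^*T when lambda = 0), then the others by
   subtracting multiples of E_22 from T, T^*, TT^* and T^*T. *)
Lemma cstar_E22 : CS (E i2 i2).
Proof.
have CT := cg_S opsys_T; have CTa := cg_S opsys_adjT.
have [l0|l0] := eqVneq l 0.
  have -> : E i2 i2 = 1%:M + (-1) *: (T *m adj T) + (-1) *: (adj T *m T).
    by rewrite T_adjT adjT_T l0; expand3; rewrite ?conjC0; ring.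
  by apply: cstar_lin; [apply: cstar_lin; [exact: cg_1|]|]; apply: cg_mul.
have -> : E i2 i2 = (l * l)^-1 *: (T *m T).
  by rewrite T_T scalerA mulVf ?scale1r // mulf_neq0.
by apply/cg_scale/cg_mul.
Qed.

Lemma cstar_E01 : CS (E i0 i1).
Proof.
rewrite (_ : E i0 i1 = T + (- l) *: E i2 i2); last by rewrite Tlam_units scaleNr addrK.
exact: cstar_lin (cg_S opsys_T) cstar_E22.
Qed.

Lemma cstar_E10 : CS (E i1 i0).
Proof.
rewrite (_ : E i1 i0 = adj T + (- l^*) *: E i2 i2); last by rewrite adjT_units scaleNr addrK.
exact: cstar_lin (cg_S opsys_adjT) cstar_E22.
Qed.

Lemma cstar_E00 : CS (E i0 i0).
Proof.
rewrite (_ : E i0 i0 = T *m adj T + (- (l * l^*)) *: E i2 i2); last by rewrite T_adjT scaleNr addrK.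
exact: cstar_lin (cg_mul (cg_S opsys_T) (cg_S opsys_adjT)) cstar_E22.
Qed.

Lemma cstar_E11 : CS (E i1 i1).
Proof.
rewrite (_ : E i1 i1 = adj T *m T + (- (l * l^*)) *: E i2 i2); last by rewrite adjT_T scaleNr addrK.
exact: cstar_lin (cg_mul (cg_S opsys_adjT) (cg_S opsys_T)) cstar_E22.
Qed.

Definition blockdiag (a : 'M[C]_3) : Prop :=
  [/\ a i0 i2 = 0, a i1 i2 = 0, a i2 i0 = 0 & a i2 i1 = 0].

Lemma cstar_blockdiag a : CS a -> blockdiag a.
Proof.
elim=> {a} [a [c0 [c1 [c2 ->]]]| | a b _ [a1 a2 a3 a4] _ [b1 b2 b3 b4]
           | c a _ [a1 a2 a3 a4] | a b _ [a1 a2 a3 a4] _ [b1 b2 b3 b4] | a _ [a1 a2 a3 a4]].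
- by split; rewrite !mxE /= ?conjC0; ring.
- by split; rewrite !mxE.
- by split; rewrite mxE ?a1 ?a2 ?a3 ?a4 ?b1 ?b2 ?b3 ?b4 addr0.
- by split; rewrite mxE ?a1 ?a2 ?a3 ?a4 mulr0.
- by split; rewrite mxE sum3 ?a1 ?a2 ?a3 ?a4 ?b1 ?b2 ?b3 ?b4; ring.
- by split; rewrite !mxE ?a1 ?a2 ?a3 ?a4 conjC0.
Qed.

Lemma blockdiag_units a : blockdiag a ->
  a = a i0 i0 *: E i0 i0 + a i0 i1 *: E i0 i1 + a i1 i0 *: E i1 i0
      + a i1 i1 *: E i1 i1 + a i2 i2 *: E i2 i2.
Proof. by case=> a1 a2 a3 a4; expand3; rewrite ?a1 ?a2 ?a3 ?a4; ring. Qed.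

Lemma linear_on_units k (f : 'M[C]_3 -> 'M[C]_k) a : linear_on CS f -> CS a ->
  f a = a i0 i0 *: f (E i0 i0) + a i0 i1 *: f (E i0 i1) + a i1 i0 *: f (E i1 i0)
        + a i1 i1 *: f (E i1 i1) + a i2 i2 *: f (E i2 i2).
Proof.
move=> [fD fZ] Ca; rewrite {1}(blockdiag_units (cstar_blockdiag Ca)).
have C00 := cg_scale (a i0 i0) cstar_E00; have C01 := cg_scale (a i0 i1) cstar_E01.
have C10 := cg_scale (a i1 i0) cstar_E10; have C11 := cg_scale (a i1 i1) cstar_E11.
have C22 := cg_scale (a i2 i2) cstar_E22.
rewrite !fD ?fZ //; do ?by repeat apply: cg_add.
all: first [exact: cstar_E00|exact: cstar_E01|exact: cstar_E10|exact: cstar_E11|exact: cstar_E22].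
Qed.

Definition j0 : 'I_2 := @Ordinal 2 0 isT.
Definition j1 : 'I_2 := @Ordinal 2 1 isT.

Lemma ord2P (i : 'I_2) : i = j0 \/ i = j1.
Proof. by case: i => [[|[|k]] ik] //; [left|right]; apply: val_inj. Qed.

Lemma sum2 (f : 'I_2 -> C) : \sum_k f k = f j0 + f j1.
Proof. by rewrite !big_ord_recr big_ord0 /= add0r; congr (f _ + f _); apply: val_inj. Qed.

Definition w (i : 'I_2) : 'I_3 := widen_ord (leqnSn 2) i.
Lemma w0 : w j0 = i0. Proof. exact: val_inj. Qed.
Lemma w1 : w j1 = i1. Proof. exact: val_inj. Qed.

Definition pi1 (a : 'M[C]_3) : 'M[C]_2 := \matrix_(i, j) a (w i) (w j).
Definition pi2 (a : 'M[C]_3) : 'M[C]_1 := (a i2 i2)%:M.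

Ltac expand2 := apply/matrixP; do 2 (let x := fresh "x" in move=> x; case: (ord2P x) => ->);
  rewrite ?(mxE, sum2, sum3, w0, w1) /=.
Ltac expand1 := apply/matrixP; do 2 (let x := fresh "x" in move=> x; rewrite (ord1 x));
  rewrite ?(mxE, sum2, sum3, w0, w1, big_ord1) /=.

Lemma pi1_starhom : is_starhom CS pi1.
Proof.
split=> [|||a _]; [by expand2|by split=> *; expand2| |by expand2].
move=> a b /cstar_blockdiag[a1 a2 a3 a4] /cstar_blockdiag[b1 b2 b3 b4].
by expand2; rewrite ?a1 ?a2 ?a3 ?a4 ?b1 ?b2 ?b3 ?b4; ring.
Qed.

Lemma pi2_starhom : is_starhom CS pi2.
Proof.
split=> [|||a _]; [by expand1|by split=> *; expand1| |by expand1].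
move=> a b /cstar_blockdiag[a1 a2 a3 a4] /cstar_blockdiag[b1 b2 b3 b4].
by expand1; rewrite ?a1 ?a2 ?a3 ?a4 ?b1 ?b2 ?b3 ?b4; ring.
Qed.

Definition embed (B : 'M[C]_2) (c : C) : 'M[C]_3 :=
  B j0 j0 *: E i0 i0 + B j0 j1 *: E i0 i1 + B j1 j0 *: E i1 i0 + B j1 j1 *: E i1 i1
  + c *: E i2 i2.

Lemma cstar_embed B c : CS (embed B c).
Proof.
apply: cg_add; last exact/cg_scale/cstar_E22.
apply: cg_add; last exact/cg_scale/cstar_E11.
apply: cg_add; last exact/cg_scale/cstar_E10.
by apply: cg_add; apply: cg_scale; [exact: cstar_E00|exact: cstar_E01].
Qed.

Lemma pi1_embed B c : pi1 (embed B c) = B.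
Proof. by expand2; ring. Qed.

Lemma pi2_embed B c : pi2 (embed B c) = c%:M.
Proof. by expand1; ring. Qed.

(* Both representations are irreducible, being onto full matrix algebras. *)
Lemma pi1_irreducible : irreducible_rep CS pi1.
Proof.
split=> // V Vinv; apply: matrix_unit_invariant_trivial => i j.
by have := Vinv _ (cstar_embed (delta_mx i j)^T 0); rewrite pi1_embed trmxK.
Qed.

Lemma pi2_irreducible : irreducible_rep CS pi2.
Proof.
split=> // V Vinv; apply: matrix_unit_invariant_trivial => i j.
have -> : delta_mx i j = (1%:M : 'M[C]_1)^T by rewrite [i]ord1 [j]ord1; expand1.
by have := Vinv _ (cstar_embed 0 1); rewrite pi2_embed.
Qed.

Lemma pi1_kernel a : CS a -> pi1 a = 0 -> a = a i2 i2 *: E i2 i2.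
Proof.
move=> /cstar_blockdiag ad /matrixP pa; rewrite {1}(blockdiag_units ad).
move: (pa j0 j0) (pa j0 j1) (pa j1 j0) (pa j1 j1); rewrite !mxE !w0 !w1 => -> -> -> ->.
by rewrite !scale0r !add0r.
Qed.

Lemma cstar_corner_unit (i j : 'I_2) : CS (E (w i) (w j)).
Proof.
by case: (ord2P i) => ->; case: (ord2P j) => ->; rewrite ?w0 ?w1;
  [exact: cstar_E00|exact: cstar_E01|exact: cstar_E10|exact: cstar_E11].
Qed.

Lemma cstar_diag_unit (a : 'I_3) : CS (E a a).
Proof. by case: (ord3P a) => ->; [exact: cstar_E00|exact: cstar_E11|exact: cstar_E22]. Qed.

Definition vec2 (a b : C) : 'cV[C]_2 := \col_(i < 2) (if (i : nat) == 0%N then a else b).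

Lemma form2 (u v : 'cV[C]_2) (M : 'M[C]_2) : (adj u *m M *m v) 0 0 =
  (u j0 0)^* * (M j0 j0 * v j0 0 + M j0 j1 * v j1 0)
  + (u j1 0)^* * (M j1 j0 * v j0 0 + M j1 j1 * v j1 0).
Proof. rewrite !mxE sum2 !mxE !sum2 !mxE; ring. Qed.

Ltac ge0_ring t := match goal with |- is_true (0 <= ?e)%R -> _ =>
  have -> : e = t by ring end; done.

(* Writing A, X, Y, B, D for the images of E_00, E_01,
   E_10, E_11, E_22, the values on 1, T, T^* give linear relations, and the
   positivity of D and of the Choi matrix [A X; Y B] force D = 0 and then
   A = E_00. *)
Section Pi1Boundary.
Variable phi : 'M[C]_3 -> 'M[C]_2.
Hypothesis phi_ucp : is_ucp CS phi.
Hypothesis phi_S : forall a, S a -> phi a = pi1 a.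

Let A := phi (E i0 i0).
Let X := phi (E i0 i1).
Let Y := phi (E i1 i0).
Let B := phi (E i1 i1).
Let D := phi (E i2 i2).

Lemma pi1_phi_one : A + B + D = 1%:M.
Proof.
case: phi_ucp => phi1 phi_lin _; have := linear_on_units phi_lin (@cg_1 _ _ S).
by rewrite phi1 => ->; rewrite !mxE /= !scale1r !scale0r !addr0.
Qed.

Lemma pi1_phi_T : X + l *: D = pi1 T.
Proof.
case: phi_ucp => _ phi_lin _; rewrite -(phi_S opsys_T).
by rewrite (linear_on_units phi_lin (cg_S opsys_T)) !mxE /= !scale1r !scale0r !add0r !addr0.
Qed.

Lemma pi1_phi_adjT : Y + l^* *: D = pi1 (adj T).
Proof.
case: phi_ucp => _ phi_lin _; rewrite -(phi_S opsys_adjT).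
rewrite (linear_on_units phi_lin (cg_S opsys_adjT)) !mxE /= ?conjC0 ?conjC1.
by rewrite !scale1r !scale0r !add0r !addr0.
Qed.

Lemma pi1_phi_diag_ge0 (a : 'I_3) (y : 'cV[C]_2) : 0 <= (adj y *m phi (E a a) *m y) 0 0.
Proof.
have := ucp_matrix_units (fun _ : 'I_1 => a) (fun _ => y) phi_ucp (fun _ _ => cstar_diag_unit a).
by rewrite !big_ord1.
Qed.

Lemma pi1_phi_choi (p r : 'cV[C]_2) :
  0 <= (adj p *m A *m p) 0 0 + (adj p *m X *m r) 0 0
       + ((adj r *m Y *m p) 0 0 + (adj r *m B *m r) 0 0).
Proof.
have := ucp_matrix_units w (fun i => if (i : nat) == 0%N then p else r) phi_ucp cstar_corner_unit.
by rewrite !sum2 /= !w0 !w1.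
Qed.

(* Testing the Choi matrix on (p, om p) with p = (1, - om^* ) and |om| = 1
   gives -(1 + 2 Re(lambda om)) <D p, p> >= 0; if 1 + 2 Re(lambda om) > 0
   this forces <D p, p> = 0. *)
Lemma pi1_phi_E22_form (om : C) : om * om^* = 1 -> 0 < 1 + l * om + (l * om)^* ->
  D j0 j0 - om^-1 * D j0 j1 - om * D j1 j0 + D j1 j1 = 0.
Proof.
move=> om_unit om_adm.
have om0 : om != 0 by apply: contra_eq_neq om_unit => ->; rewrite mul0r eq_sym oner_neq0.
have omc : om^* = om^-1 by rewrite -[om^*]mul1r -(mulVf om0) -mulrA om_unit mulr1.
have eX : X = pi1 T - l *: D by rewrite -pi1_phi_T addrK.
have eY : Y = pi1 (adj T) - l^* *: D by rewrite -pi1_phi_adjT addrK.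
have eB : B = 1%:M - A - D by apply/matrixP => i j; rewrite -pi1_phi_one !mxE; ring.
have choi := pi1_phi_choi (vec2 1 (- om^* )) (vec2 om (-1)).
have Dpos := pi1_phi_diag_ge0 i2 (vec2 1 (- om^* )).
rewrite eX eY eB !form2 ?mxE /= ?w0 ?w1 ?mxE /= in choi Dpos.
rewrite !rmorphN /= ?conjC0 ?conjC1 ?conjCK omc in choi Dpos.
rewrite rmorphM /= omc in om_adm.
set q := (X in X = 0).
have q_ge0 : 0 <= q.
  by move: Dpos; match goal with |- is_true (0 <= ?e)%R -> _ =>
    have -> : e = q by rewrite /q; field end.
have : 0 <= - (1 + l * om + l^* / om) * q.
  by move: choi; match goal with |- is_true (0 <= ?e)%R -> _ =>
    have -> : e = - (1 + l * om + l^* / om) * q by rewrite /q; field end.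
rewrite mulNr oppr_ge0 pmulr_rle0 // => q_le0.
by apply/le_anti; rewrite q_ge0 q_le0.
Qed.

(* Three admissible phases om = u, iu, -iu (with lambda u >= 0) make the
   form of D vanish at three vectors spanning enough to force D = 0. *)
Lemma pi1_phi_E22 : D = 0.
Proof.
have [u [u_unit lu_ge0]] := unimodular_phase l.
have u0 : u != 0 by apply: contra_eq_neq u_unit => ->; rewrite mul0r eq_sym oner_neq0.
have lu_real : (l * u)^* = l * u by rewrite geC0_conj.
have rotated (c : C) : c * c^* = 1 -> 0 <= c + c^* ->
    D j0 j0 - (c * u)^-1 * D j0 j1 - (c * u) * D j1 j0 + D j1 j1 = 0.
  move=> c_unit c_re; apply: pi1_phi_E22_form.
    by rewrite rmorphM /= mulrACA c_unit u_unit mulr1.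
  have -> : 1 + l * (c * u) + (l * (c * u))^* = 1 + (c + c^*) * (l * u).
    by rewrite mulrCA rmorphM /= lu_real; ring.
  by apply: ltr_wpDr; [exact: mulr_ge0|exact: ltr01].
have one_unit : 1 * 1^* = 1 :> C by rewrite conjC1 mulr1.
have one_re : 0 <= 1 + 1^* :> C by rewrite conjC1 addr_ge0 ?ler01.
have i_unit : 'i * 'i^* = 1 :> C by rewrite conjCi mulrN -expr2 sqrCi opprK.
have i_re : 0 <= 'i + 'i^* :> C by rewrite conjCi subrr.
have mi_unit : - 'i * (- 'i)^* = 1 :> C by rewrite rmorphN /= mulrNN.
have mi_re : 0 <= - 'i + (- 'i)^* :> C by rewrite rmorphN /= conjCi opprK addNr.
have E1 := rotated 1 one_unit one_re.
have E2 := rotated 'i i_unit i_re.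
have E3 := rotated (- 'i) mi_unit mi_re.
rewrite mul1r in E1; rewrite invfM invCi in E2; rewrite invfM invrN invCi opprK in E3.
have [sum0 s0 t0] : [/\ D j0 j0 + D j1 j1 = 0, u^-1 * D j0 j1 = 0 & u * D j1 j0 = 0].
  by apply: phase_system_eq0; [rewrite -E1|rewrite -E2|rewrite -E3]; ring.
have D00_ge0 : 0 <= D j0 j0.
  by move: (pi1_phi_diag_ge0 i2 (vec2 1 0)); rewrite form2 !mxE /= conjC1 conjC0; ge0_ring (D j0 j0).
have D11_ge0 : 0 <= D j1 j1.
  by move: (pi1_phi_diag_ge0 i2 (vec2 0 1)); rewrite form2 !mxE /= conjC1 conjC0; ge0_ring (D j1 j1).
move/eqP: sum0; rewrite paddr_eq0 // => /andP[/eqP D00 /eqP D11].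
move/eqP: s0; rewrite mulf_eq0 invr_eq0 (negbTE u0) => /eqP D01.
move/eqP: t0; rewrite mulf_eq0 (negbTE u0) => /eqP D10.
by expand2; rewrite ?D00 ?D01 ?D10 ?D11.
Qed.

(* Once D = 0 the Choi matrix is [A E_01; E_10 1 - A]; testing it on
   suitable vectors pins down the diagonal and then the off-diagonal of A. *)
Lemma pi1_phi_E00 : A = pi1 (E i0 i0).
Proof.
have eX : X = pi1 T by rewrite -pi1_phi_T pi1_phi_E22 scaler0 addr0.
have eY : Y = pi1 (adj T) by rewrite -pi1_phi_adjT pi1_phi_E22 scaler0 addr0.
have eB : B = 1%:M - A by apply/matrixP => i j; rewrite -pi1_phi_one pi1_phi_E22 !mxE; ring.
have choi p r := pi1_phi_choi p r; rewrite eX eY eB in choi.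
have diag1 : 0 <= A j0 j0 - 1 - A j1 j1.
  move: (choi (vec2 (-1) 0) (vec2 0 1)); rewrite !form2 ?mxE /= ?w0 ?w1 ?mxE /=.
  by rewrite !rmorphN /= ?conjC0 ?conjC1; ge0_ring (A j0 j0 - 1 - A j1 j1).
have diag2 : 0 <= 1 - A j0 j0.
  move: (pi1_phi_diag_ge0 i1 (vec2 1 0)); rewrite -/B eB form2 ?mxE /= ?conjC0 ?conjC1.
  by ge0_ring (1 - A j0 j0).
have diag3 : 0 <= A j1 j1.
  move: (pi1_phi_diag_ge0 i0 (vec2 0 1)); rewrite -/A form2 ?mxE /= ?conjC0 ?conjC1.
  by ge0_ring (A j1 j1).
have : (A j0 j0 - 1 - A j1 j1) + (1 - A j0 j0) + A j1 j1 == 0 by apply/eqP; ring.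
rewrite paddr_eq0 ?(addr_ge0 diag1 diag2) // => /andP[+ /eqP A11].
rewrite paddr_eq0 // => /andP[_]; rewrite subr_eq0 eq_sym => /eqP A00.
have [A01 A10] : A j0 j1 = 0 /\ A j1 j0 = 0.
  apply: conj_linear_ge0_eq0 => b; move: (choi (vec2 1 b) (vec2 0 (-1))).
  rewrite !form2 ?mxE /= ?w0 ?w1 ?mxE /= !rmorphN /= ?conjC0 ?conjC1 A00 A11.
  by ge0_ring (b * A j0 j1 + b^* * A j1 j0).
by expand2; rewrite ?A00 ?A01 ?A10 ?A11.
Qed.

Lemma pi1_phi_eq a : CS a -> phi a = pi1 a.
Proof.
move=> Ca; case: phi_ucp => _ phi_lin _; case: pi1_starhom => _ pi1_lin _ _.
rewrite (linear_on_units phi_lin Ca) (linear_on_units pi1_lin Ca) -/A -/X -/Y -/B -/D.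
have eB : B = 1%:M - A by apply/matrixP => i j; rewrite -pi1_phi_one pi1_phi_E22 !mxE; ring.
have eX : X = pi1 T by rewrite -pi1_phi_T pi1_phi_E22 scaler0 addr0.
have eY : Y = pi1 (adj T) by rewrite -pi1_phi_adjT pi1_phi_E22 scaler0 addr0.
rewrite eB eX eY pi1_phi_E00 pi1_phi_E22.
by expand2; ring.
Qed.

End Pi1Boundary.

Lemma pi1_boundary : boundary_rep S pi1.
Proof.
split; [exact: pi1_starhom|exact: pi1_irreducible|].
by move=> phi phi_ucp phi_S a Ca; exact: pi1_phi_eq.
Qed.
Lemma form1 (u v : 'cV[C]_1) (M : 'M[C]_1) : (adj u *m M *m v) 0 0 = (u 0 0)^* * M 0 0 * v 0 0.
Proof. by rewrite !mxE big_ord1 !mxE big_ord1 !mxE. Qed.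

(* With
   alpha, gamma, gamma', beta, delta the values of a UCP extension phi of
   pi2|S on E_00, E_01, E_10, E_11, E_22, the values on 1, T, T^* give
   gamma = lambda (alpha + beta), and testing the Choi matrix
   [alpha gamma; gamma' beta] on (1, -2 lambda^* ) yields
   (1 - 4|lambda|^2) alpha >= 0, hence alpha = 0; similarly beta = 0. *)
Section Pi2Boundary.
Hypothesis l_big : 2^-1 < `|l|.
Variable phi : 'M[C]_3 -> 'M[C]_1.
Hypothesis phi_ucp : is_ucp CS phi.
Hypothesis phi_S : forall a, S a -> phi a = pi2 a.

Let al := phi (E i0 i0) 0 0.
Let ga := phi (E i0 i1) 0 0.
Let ga' := phi (E i1 i0) 0 0.
Let be := phi (E i1 i1) 0 0.
Let de := phi (E i2 i2) 0 0.

Lemma pi2_phi_diag_ge0 (a : 'I_3) : 0 <= phi (E a a) 0 0.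
Proof.
have := ucp_matrix_units (fun _ : 'I_1 => a) (fun _ => 1%:M) phi_ucp (fun _ _ => cstar_diag_unit a).
by rewrite !big_ord1 form1 !mxE conjC1 mul1r mulr1.
Qed.

Lemma pi2_phi_choi (p r : C) :
  0 <= p^* * al * p + p^* * ga * r + (r^* * ga' * p + r^* * be * r).
Proof.
have := ucp_matrix_units w (fun i => if (i : nat) == 0%N then p%:M else r%:M) phi_ucp
  cstar_corner_unit.
by rewrite !sum2 /= !w0 !w1 !form1 !mxE.
Qed.

Lemma pi2_phi_relations : [/\ al + be + de = 1, ga + l * de = l & ga' + l^* * de = l^*].
Proof.
case: phi_ucp => phi1 phi_lin _.
have := linear_on_units phi_lin (@cg_1 _ _ S); rewrite phi1 => /matrixP /(_ 0 0).
have := linear_on_units phi_lin (cg_S opsys_T); rewrite (phi_S opsys_T) => /matrixP /(_ 0 0).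
have := linear_on_units phi_lin (cg_S opsys_adjT); rewrite (phi_S opsys_adjT) => /matrixP /(_ 0 0).
rewrite !mxE /= ?conjC0 ?conjC1 !mulr1n => e3 e2 e1.
by split; [apply: etrans (esym e1)|apply: etrans (esym e2)|apply: etrans (esym e3)];
  rewrite /al /be /de /ga /ga'; ring.
Qed.

Lemma pi2_phi_corner : al = 0 /\ be = 0.
Proof.
have [r1 r2 r3] := pi2_phi_relations.
have ede : de = 1 - al - be by rewrite -r1; ring.
have ega : ga = l * (al + be) by rewrite -(subr0 ga) -[0](subrr l) -{1}r2 ede; ring.
have ega' : ga' = l^* * (al + be) by rewrite -(subr0 ga') -[0](subrr l^*) -{1}r3 ede; ring.
have al_ge0 : 0 <= al := pi2_phi_diag_ge0 i0.
have be_ge0 : 0 <= be := pi2_phi_diag_ge0 i1.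
have disc := disc_lt0 l_big.
have : 0 <= (1 - 4%:R * (l * l^*)) * al.
  move: (pi2_phi_choi 1 (- (l^* + l^*))); rewrite ega ega' conjC1 rmorphN rmorphD /= conjCK.
  by ge0_ring ((1 - 4%:R * (l * l^*)) * al).
rewrite nmulr_rge0 // => al_le0.
have : 0 <= (1 - 4%:R * (l * l^*)) * be.
  move: (pi2_phi_choi (- (l + l)) 1); rewrite ega ega' conjC1 rmorphN rmorphD /=.
  by ge0_ring ((1 - 4%:R * (l * l^*)) * be).
rewrite nmulr_rge0 // => be_le0.
by split; apply/le_anti; rewrite ?al_ge0 ?be_ge0 ?al_le0 ?be_le0.
Qed.

Lemma pi2_phi_eq a : CS a -> phi a = pi2 a.
Proof.
move=> Ca; have [r1 r2 r3] := pi2_phi_relations; have [al0 be0] := pi2_phi_corner.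
have de1 : de = 1 by rewrite -r1 al0 be0 !add0r.
have ga0 : ga = 0 by move: r2; rewrite de1 mulr1 -{2}[l]add0r => /addIr.
have ga'0 : ga' = 0 by move: r3; rewrite de1 mulr1 -{2}[l^*]add0r => /addIr.
case: phi_ucp => _ phi_lin _; case: pi2_starhom => _ pi2_lin _ _.
rewrite (linear_on_units phi_lin Ca) (linear_on_units pi2_lin Ca).
by expand1; rewrite -/al -/ga -/ga' -/be -/de al0 be0 de1 ga0 ga'0; ring.
Qed.

End Pi2Boundary.

Lemma pi2_boundary : 2^-1 < `|l| -> boundary_rep S pi2.
Proof.
move=> l_big; split; [exact: pi2_starhom|exact: pi2_irreducible|].
by move=> phi phi_ucp phi_S a Ca; exact: pi2_phi_eq.
Qed.

(* The range projection rho(E_22) of a boundary representation commutes with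
   rho(C^*(S_T)), so by irreducibility it is 0 or the identity. *)
Lemma boundary_E22_trivial k (rho : 'M[C]_3 -> 'M[C]_k) :
  boundary_rep S rho -> rho (E i2 i2) = 0 \/ rho (E i2 i2) = 1%:M.
Proof.
case=> [[_ _ rhoM _] [_ rho_irr] _]; set P := rho (E i2 i2).
have PP : P *m P = P by rewrite /P -rhoM ?mul_delta_mx //; exact: cstar_E22.
have central b : CS b -> E i2 i2 *m b = b *m E i2 i2.
  by move=> /cstar_blockdiag[b1 b2 b3 b4]; expand3; rewrite ?b1 ?b2 ?b3 ?b4; ring.
have Pinv b : CS b -> (P^T *m (rho b)^T <= P^T)%MS.
  move=> Cb; have C22 := cstar_E22.
  by rewrite -trmx_mul /P -rhoM // -central // rhoM // trmx_mul submxMl.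
case: (rho_irr _ Pinv) => [|]; first by rewrite submx0 trmx_eq0 => /eqP; left.
rewrite sub1mx row_full_unit unitmx_tr => P_unit.
by right; rewrite -(mulKmx P_unit P) PP mulVmx.
Qed.

(* For |lambda| <= 1/2, lambda lies in the numerical range of the 2 x 2
   Jordan block: xi = (x, lambda / x, 0) with x^2 = (1 + s) / 2,
   s = sqrt(1 - 4|lambda|^2), is a unit vector with <T xi, xi> = lambda. *)
Lemma numerical_range_witness : `|l| <= 2^-1 -> exists xi : 'cV[C]_3,
  [/\ vstate xi (E i2 i2) = 0, vstate xi 1%:M = 1, vstate xi T = l & vstate xi (adj T) = l^*].
Proof.
move=> l_small; set s := sqrtC (1 - 4%:R * (l * l^*)).
have s_ge0 : 0 <= s by rewrite sqrtC_ge0 disc_ge0.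
have ss : s * s = 1 - 4%:R * (l * l^*) by rewrite -expr2 sqrtCK.
have s1_gt0 : 0 < 1 + s by apply: ltr_wpDr; [exact: s_ge0|exact: ltr01].
set x := sqrtC ((1 + s) / 2%:R).
have xx : x * x = (1 + s) / 2%:R by rewrite -expr2 sqrtCK.
have x0 : x != 0.
  apply: contraTneq s1_gt0 => x0; move: xx; rewrite x0 mul0r => /esym/eqP.
  by rewrite mulf_eq0 invr_eq0 pnatr_eq0 orbF => /eqP ->; rewrite ltxx.
have xc : x^* = x by rewrite geC0_conj // sqrtC_ge0 divr_ge0 ?ltW // ler0n.
exists (\col_i (if (i : nat) == 0%N then x else if (i : nat) == 1%N then l / x else 0)).
rewrite /vstate; split.
- by rewrite form_delta_mx !mxE /= conjC0 mul0r.
- rewrite ?(mxE, sum3) /= ?conjC0 xc fmorph_div /= xc.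
  transitivity (x * x + (l^* * l) / (x * x)); first by field.
  have -> : l^* * l = (1 - s * s) / 4%:R by rewrite ss; field.
  by rewrite xx; field; rewrite gt_eqF.
- by rewrite ?(mxE, sum3) /= ?conjC0 xc fmorph_div /= xc; field.
- by rewrite ?(mxE, sum3) /= ?conjC0 ?conjC1 ?rmorph0 fmorph_div /= xc; field.
Qed.

(* For |lambda| <= 1/2 every boundary representation kills E_22: otherwise
   it would be a -> a_22 1, but the vector state of the witness above also
   extends its restriction to S_T while vanishing on E_22. *)
Lemma small_boundary_E22 k (rho : 'M[C]_3 -> 'M[C]_k) :
  `|l| <= 2^-1 -> boundary_rep S rho -> rho (E i2 i2) = 0.
Proof.
move=> l_small rho_bd; case: (boundary_E22_trivial rho_bd) => // P1.
case: rho_bd => [[_ [_ rhoZ] rhoM _] [k_gt0 _] rho_unique].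
have rho_entry a : CS a -> rho a = a i2 i2 *: 1%:M.
  move=> Ca; rewrite -[rho a]mulmx1 -P1 -rhoM //; last exact: cstar_E22.
  have -> : a *m E i2 i2 = a i2 i2 *: E i2 i2.
    by case: (cstar_blockdiag Ca) => a1 a2 a3 a4; expand3; rewrite ?a1 ?a2 ?a3 ?a4; ring.
  by rewrite rhoZ ?P1 //; exact: cstar_E22.
have [xi [xi22 xi1 xiT xiTa]] := numerical_range_witness l_small.
have phi_ucp := vector_state_ucp k CS xi1.
have phi_S a : S a -> vstate xi a *: 1%:M = rho a.
  case=> c0 [c1 [c2 ->]]; rewrite rho_entry; last by apply: cg_S; exists c0, c1, c2.
  by rewrite !vstateD !vstateZ xi1 xiT xiTa !mxE /=; congr (_ *: _); ring.
move: (rho_unique _ phi_ucp phi_S _ cstar_E22); rewrite xi22 scale0r P1.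
move=> /matrixP /(_ (Ordinal k_gt0) (Ordinal k_gt0)); rewrite !mxE eqxx /=.
by move=> /eqP; rewrite eq_sym oner_eq0.
Qed.

Lemma starhom_on_pi1_kernel k (rho : 'M[C]_3 -> 'M[C]_k) a :
  is_starhom CS rho -> CS a -> pi1 a = 0 -> rho a = a i2 i2 *: rho (E i2 i2).
Proof. by case=> _ [_ rhoZ] _ _ Ca /(pi1_kernel Ca) {1}->; rewrite rhoZ //; exact: cstar_E22. Qed.

Lemma silov_small a : `|l| <= 2^-1 -> CS a -> (pi1 a = 0 <-> silov S a).
Proof.
move=> l_small Ca; split=> [pa|[_ /(_ 2%N pi1 pi1_boundary)] //].
split=> // k rho rho_bd; have [rho_star _ _] := rho_bd.
by rewrite (starhom_on_pi1_kernel rho_star Ca pa) (small_boundary_E22 l_small rho_bd) scaler0.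
Qed.

Lemma silov_big a : 2^-1 < `|l| -> CS a -> (pi1 a = 0 /\ pi2 a = 0 <-> silov S a).
Proof.
move=> l_big Ca; split=> [[pa /matrixP/(_ 0 0)]|[_ rho0]]; last first.
  by split; [exact: rho0 _ _ pi1_boundary|exact: rho0 _ _ (pi2_boundary l_big)].
rewrite !mxE /= mulr1n => a22; split=> // k rho [rho_star _ _].
by rewrite (starhom_on_pi1_kernel rho_star Ca pa) a22 scale0r.
Qed.

End Envelope.

Theorem mainTheorem5 (C : numClosedFieldType) (l : C) :
  (`|l| <= 2^-1 -> env_iso_M (opsys (Tlam l)) 2) /\
  (2^-1 < `|l| -> env_iso_MM (opsys (Tlam l)) 2 1).
Proof.
split=> [l_small|l_big].
- exists (@pi1 C); split; first exact: pi1_starhom.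
  + by move=> B; exists (embed B 0); [exact: cstar_embed|exact: pi1_embed].
  + by move=> a Ca; exact: silov_small.
- exists (@pi1 C), (@pi2 C); split; [exact: pi1_starhom|exact: pi2_starhom| |].
  + move=> B1 B2; exists (embed B1 (B2 0 0)); first exact: cstar_embed.
    by rewrite pi1_embed pi2_embed; split=> //; apply/matrixP => i j; rewrite !ord1 !mxE.
  + by move=> a Ca; exact: silov_big.
Qed.
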